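(* Let $G=(V,E)$ be a connected graph with at least two vertices. Call a multiset $\mathcal{D}$ of edges of $G$ a domino covering if every vertex is an endpoint of some edge of $\mathcal{D}$, and call it saturated if removing any single edge from $\mathcal{D}$ leaves some vertex not an endpoint of any remaining edge. Then the maximum number of edges in a saturated domino covering of $G$ equals $|V| - \gamma(G)$, where $\gamma(G)$ is the domination number of $G$ (the minimum number of vertex sets of star subgraphs of $G$ needed to cover $V$). *)

(* A finite simple graph is a finType T of vertices with a
   symmetric irreflexive adjacency relation e : rel T. *)
From mathcomp Require Import all_boot all_order.
Set Implicit Arguments. Unset Strict Implicit. Unset Printing Implicit Defensive.

(* A (multiset of) edges is represented as a sequence of vertex pairs, each of
   which must be an edge of the graph; repetitions are allowed (multiset). *)
Definition edge_multiset (T : finType) (e : rel T) (D : seq (T * T)) : bool :=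
  all (fun d => e d.1 d.2) D.

Definition covers (T : finType) (D : seq (T * T)) : bool :=
  [forall v : T, has (fun d => (v == d.1) || (v == d.2)) D].

Definition domino_covering (T : finType) (e : rel T) (D : seq (T * T)) : bool :=
  edge_multiset e D && covers D.

Definition saturated (T : finType) (D : seq (T * T)) : bool :=
  all (fun d => ~~ covers (rem d D)) D.

Definition dominating (T : finType) (e : rel T) (S : {set T}) : bool :=
  [forall v : T, (v \in S) || [exists u in S, e u v]].

(* domination number: minimum size of a dominating set ([set: T] is dominating) *)
Definition domination_number (T : finType) (e : rel T) : nat :=
  #|[arg min_(S < [set: T] | dominating e S) #|S| ]|.

From mathcomp Require Import all_boot all_order zify.
Set Implicit Arguments. Unset Strict Implicit. Unset Printing Implicit Defensive.

(* Saturated domino coverings of a graph with no isolated vertex are exactly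
   the minimal edge covers, and their maximum size is |V| - gamma(G).

   Upper bound: in a saturated covering D every edge d owns a private vertex,
   covered by d alone.  Distinct edges have distinct private vertices, and the
   vertices that are not private form a dominating set (the other endpoint of
   the edge owning a private vertex is a non-private neighbour of it).  Hence
   gamma(G) <= |V| - |D|.

   Lower bound: a spanning star forest is encoded by a "star function" f
   sending every leaf to the centre of its star (centres are fixed points).
   When no centre is lonely (leafless), the edges (v, f v) for the leaves v
   form a saturated covering with |V| - #centres edges.  A minimum dominating
   set yields a star function with at most gamma(G) centres, and a lonely
   centre can always be regrafted onto a neighbour without increasing the
   number of centres and while strictly shrinking the set of lonely centres;
   iterating gives a covering of size at least |V| - gamma(G). *)

Lemma uniq_of_notin_rem (A : eqType) (s : seq A) :
  (forall x, x \in s -> x \notin rem x s) -> uniq s.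
Proof.
move=> notin_rem; apply: count_mem_uniq => x.
have [xs|xs] := boolP (x \in s); last exact/count_memPn.
have := notin_rem x xs; rewrite -has_pred1 has_count -leqNgt count_mem_rem eqxx.
by move: xs; rewrite -has_pred1 has_count; lia.
Qed.

Section DominoCoverings.
Variables (T : finType) (e : rel T).
Hypotheses (e_sym : symmetric e) (e_irr : irreflexive e).

Lemma domination_number_min (S : {set T}) :
  dominating e S -> domination_number e <= #|S|.
Proof.
move=> domS; rewrite /domination_number.
case: arg_minnP => [|A _ minA]; last exact: minA.
by apply/forallP => v; rewrite in_setT.
Qed.

Lemma domination_number_attained :
  exists2 S : {set T}, dominating e S & #|S| = domination_number e.
Proof.
rewrite /domination_number; case: arg_minnP => [|A domA _]; last by exists A.
by apply/forallP => v; rewrite in_setT.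
Qed.

Lemma connected_has_neighbour :
  (forall x y, connect e x y) -> 1 < #|T| -> forall s, exists w, e s w.
Proof.
move=> conn two s; have [x [y [_ _ xy]]] := card_gt1P two.
have [t ts] : exists t, t != s.
  by have [<-|xs] := eqVneq x s; [exists y; rewrite eq_sym | exists x].
have /connectP [[|w p] /= path_p last_p] := conn s t.
  by rewrite last_p eqxx in ts.
by exists w; case/andP: path_p.
Qed.

Definition incident (v : T) (d : T * T) : bool := (v == d.1) || (v == d.2).

Definition private_vertex (D : seq (T * T)) (d : T * T) (v : T) : bool :=
  incident v d && ~~ has (incident v) (rem d D).

Lemma saturated_private D d :
  covers D -> saturated D -> d \in D -> exists v, private_vertex D d v.
Proof.
move=> /forallP covD /allP satD dD.
have /forallPn [v uncovered] := satD d dD.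
exists v; rewrite /private_vertex uncovered andbT.
have /hasP [x xD vx] := covD v.
have [<- //|xd] := eqVneq x d.
by move/hasPn: uncovered => /(_ x (rem_mem xd xD)); rewrite /incident vx.
Qed.

Lemma private_unique D d d' v :
  private_vertex D d v -> d' \in D -> incident v d' -> d' = d.
Proof.
case/andP=> _ /hasPn priv d'D vd'; apply/eqP/negPn/negP => d'd.
by move: (priv d' (rem_mem d'd d'D)); rewrite vd'.
Qed.

Lemma other_endpoint (d : T * T) v :
  e d.1 d.2 -> incident v d -> exists2 u, e u v & incident u d && (u != v).
Proof.
move=> ed; have d12 : d.1 != d.2 by apply: contraTneq ed => ->; rewrite e_irr.
case/orP => /eqP ->; first by exists d.2; rewrite 1?e_sym // /incident eqxx orbT eq_sym.
by exists d.1; rewrite // /incident eqxx.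
Qed.

(* The non-private vertices of a saturated covering D form a dominating set
   with |V| - |D| elements. *)
Lemma saturated_dominating D : domino_covering e D -> saturated D ->
  exists2 S : {set T}, dominating e S & #|S| + size D = #|T|.
Proof.
case/andP=> /allP edges covD satD.
pose p d := odflt d.1 [pick v | private_vertex D d v].
have pP d : d \in D -> private_vertex D d (p d).
  move=> dD; rewrite /p; case: pickP => [v //|none] /=.
  by have [v] := saturated_private covD satD dD; rewrite none.
have p_inj : {in D &, injective p}.
  move=> d1 d2 d1D d2D p12; apply/esym/(private_unique (pP d1 d1D) d2D).
  by rewrite p12; case/andP: (pP d2 d2D).
have uniqD : uniq D.
  apply: uniq_of_notin_rem => d dD; apply/negP => d_rem.
  by case/andP: (pP d dD) => pd /hasPn /(_ d d_rem); rewrite pd.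
have uniq_p : uniq (map p D) by rewrite map_inj_in_uniq.
exists (~: [set x in map p D]); last first.
  have <- : #|[set x in map p D]| = size D.
    by rewrite -(size_map p) -(card_uniqP uniq_p); apply: eq_card => x; rewrite inE.
  by rewrite addnC cardsC.
apply/forallP => v; rewrite !inE; apply/orP.
have [/mapP [d dD ->]|] := boolP (v \in map p D); [right | by left].
have [u eu /andP [ud up]] := other_endpoint (edges d dD) (proj1 (andP (pP d dD))).
apply/existsP; exists u; rewrite !inE eu andbT; apply/negP => /mapP [d' d'D ud'].
have d'd := private_unique (pP d' d'D) dD; rewrite -ud' in d'd.
by move: up; rewrite ud' (d'd ud) eqxx.
Qed.

Lemma saturated_size_le D : domino_covering e D -> saturated D ->
  size D <= #|T| - domination_number e.
Proof.
move=> covD satD; have [S domS cardS] := saturated_dominating covD satD.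
by have := domination_number_min domS; lia.
Qed.

(* f encodes a spanning star forest: a vertex moved by f is a leaf adjacent to
   its centre f v, and centres are fixed points of f. *)
Definition star_fun (f : T -> T) : Prop :=
  forall v, f v != v -> e v (f v) /\ f (f v) = f v.

Definition centers (f : T -> T) : {set T} := [set x | f x == x].

Definition lonely (f : T -> T) : {set T} :=
  [set x | (f x == x) && [forall v, (f v == x) ==> (v == x)]].

(* A star forest without lonely centres yields a saturated covering: the
   edges joining each leaf to its centre, each being the only edge covering
   its leaf. *)
Lemma star_covering f : star_fun f -> lonely f = set0 ->
  exists D, [/\ domino_covering e D, saturated D & size D = #|T| - #|centers f|].
Proof.
move=> f_star no_lonely.
pose L := [seq v <- enum T | f v != v].
have inL v : (v \in L) = (f v != v) by rewrite mem_filter mem_enum andbT.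
have uniqL : uniq L by rewrite filter_uniq ?enum_uniq.
pose D := [seq (v, f v) | v <- L].
have uniqD : uniq D by rewrite map_inj_uniq // => x y [].
exists D; split.
- apply/andP; split.
    by apply/allP => _ /mapP [v vL ->]; rewrite inL in vL; case: (f_star v vL).
  apply/forallP => v; apply/hasP.
  have [fv|leaf] := eqVneq (f v) v; last first.
    by exists (v, f v); [apply/map_f; rewrite inL | rewrite /= eqxx].
  have : v \notin lonely f by rewrite no_lonely inE.
  rewrite inE fv eqxx => /forallPn [u]; rewrite negb_imply => /andP [/eqP fu uv].
  exists (u, f u); last by rewrite /= fu eqxx orbT.
  by apply/map_f; rewrite inL fu eq_sym.
- apply/allP => _ /mapP [v vL ->]; apply/forallPn; exists v; apply/hasPn.
  move=> x; rewrite mem_rem_uniq // inE => /andP [xd /mapP [u uL xE]].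
  rewrite xE /= in xd *; rewrite inL in vL; rewrite inL in uL.
  apply/negP; case/orP => /eqP vE.
    by rewrite vE eqxx in xd.
  by case: (f_star u uL) => _ ffu; rewrite vE ffu -vE eqxx in vL.
- rewrite size_map -(card_uniqP uniqL) -(cardsC (centers f)) addKn.
  by apply: eq_card => v; rewrite !inE inL.
Qed.

(* Attaching every vertex outside a dominating set S to a neighbour in S
   gives a star forest whose centres lie in S. *)
Lemma dominating_star_fun (S : {set T}) :
  dominating e S -> exists2 f, star_fun f & centers f \subset S.
Proof.
move=> /forallP domS.
pose f v := if v \in S then v else odflt v [pick u in S | e u v].
have fS v : v \in S -> f v = v by rewrite /f => ->.
have fN v : v \notin S -> exists2 u, u \in S & e u v /\ f v = u.
  move=> vS; rewrite /f (negbTE vS); case: pickP => [u /andP [uS euv]|none].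
    by exists u.
  by move: (domS v); rewrite (negbTE vS) => /existsP [u]; rewrite none.
exists f.
  move=> v; have [vS|vS] := boolP (v \in S); first by rewrite fS ?eqxx.
  by have [u uS [euv ->]] := fN v vS; rewrite e_sym fS.
apply/subsetP => x; rewrite inE; apply: contraTT => xS.
by have [u uS [_ ->]] := fN x xS; apply: contraNneq xS => <-.
Qed.

(* Regrafting a lonely centre s onto a neighbour w: s and w become leaf and
   centre of a common star; if w was the only leaf of its centre f w, that
   centre joins the star of w as well. *)
Section Regraft.
Variables (f : T -> T) (s w : T).
Hypotheses (f_star : star_fun f) (s_lonely : s \in lonely f) (esw : e s w).

Definition only_leaf : bool :=
  [forall u, (f u == f w) ==> (u == w) || (u == f w)].

Definition moved (v : T) : bool := [|| v == s, v == w | (v == f w) && only_leaf].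

Definition regraft (v : T) : T := if moved v then w else f v.

Let fs : f s = s.
Proof. by move: s_lonely; rewrite inE => /andP [/eqP]. Qed.

Let only_s v : f v = s -> v = s.
Proof.
by move: s_lonely; rewrite inE => /andP [_ /forallP /(_ v) /implyP H] /eqP/H/eqP.
Qed.

Let sw : s != w.
Proof. by apply: contraTneq esw => ->; rewrite e_irr. Qed.

Let moved_s : moved s. Proof. by rewrite /moved eqxx. Qed.

Let moved_w : moved w. Proof. by rewrite /moved eqxx orbT. Qed.

Lemma regraft_star : star_fun regraft.
Proof.
move=> v; rewrite /regraft.
have [mv wv|mv fv] := boolP (moved v).
  split; last by rewrite moved_w.
  case/or3P: mv => [/eqP -> //|/eqP vE|/andP [/eqP vE _]].
    by rewrite vE eqxx in wv.
  rewrite vE e_sym; case: (@f_star w) => //.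
  by rewrite -vE eq_sym.
have [efv ffv] := f_star fv; split=> //.
have [mfv|//] := boolP (moved (f v)).
case/or3P: mfv => [/eqP /only_s vs|/eqP //|/andP [/eqP fvw leaf]].
  by rewrite vs moved_s in mv.
move/forallP: leaf => /(_ v) /implyP; rewrite fvw eqxx => /(_ isT).
case/orP => /eqP vE; first by rewrite vE moved_w in mv.
by rewrite -vE in fvw; rewrite fvw eqxx in fv.
Qed.

Lemma regraft_centers : centers regraft \subset w |: (centers f :\ s).
Proof.
apply/subsetP => x; rewrite !inE /regraft.
have [_ /eqP <-|mx fx] := boolP (moved x); first by rewrite eqxx.
by rewrite fx andbT; move: mx; rewrite /moved; case: (x == s); rewrite ?orbT.
Qed.

Lemma regraft_lonely : lonely regraft \subset lonely f :\ s.
Proof.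
apply/subsetP => x; rewrite !inE => /andP [/eqP gx /forallP only_x].
have only_x' v : regraft v = x -> v = x by move/eqP; move/implyP: (only_x v) => H /H /eqP.
have xw : x != w.
  apply: contraTneq sw => xE; rewrite negbK -xE (only_x' s) //.
  by rewrite /regraft moved_s xE.
have mx : ~~ moved x by apply: contraNN xw => mx; rewrite -{1}gx /regraft mx.
move: gx; rewrite /regraft (negbTE mx) => fx.
have xs : x != s by move: mx; rewrite /moved negb_or => /andP [].
rewrite xs fx eqxx /=; apply/forallP => v; apply/implyP => /eqP fv; apply/eqP.
have [mv|nmv] := boolP (moved v); last by apply: only_x'; rewrite /regraft (negbTE nmv).
case/or3P: mv => [/eqP vE|/eqP vE|/andP [/eqP vE _]].
- by rewrite -fv vE fs eqxx in xs.
- have fwx : f w = x by rewrite -vE.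
  have : ~~ only_leaf by apply: contra mx => leaf; rewrite /moved -fwx eqxx leaf !orbT.
  case/forallPn => u; rewrite negb_imply negb_or fwx => /and3P [/eqP fu uw ux].
  have us : u != s by apply: contraNneq xs => us; rewrite -fu us fs.
  have := only_x' u; rewrite /regraft /moved (negbTE us) (negbTE uw) fwx.
  by rewrite (negbTE ux) /= fu => /(_ erefl) uxE; rewrite uxE eqxx in ux.
- have [fw|fw] := eqVneq (f w) w; first by rewrite -fv vE !fw.
  by have [_ ffw] := f_star fw; rewrite -fv vE ffw.
Qed.

End Regraft.

Lemma remove_lonely f : (forall s, exists w, e s w) -> star_fun f ->
  exists2 g, star_fun g & #|centers g| <= #|centers f| /\ lonely g = set0.
Proof.
move=> nbr; move: {2}#|lonely f| (leqnn #|lonely f|) => n.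
elim: n f => [|n IH] f bound f_star.
  by exists f => //; split=> //; apply/eqP; rewrite -cards_eq0 -leqn0.
have [no_lonely|/set0Pn [s s_lonely]] := eqVneq (lonely f) set0; first by exists f.
have [w esw] := nbr s.
have lonely_le : #|lonely (regraft f s w)| <= n.
  move: bound; rewrite (cardsD1 s) s_lonely add1n ltnS; apply: leq_trans.
  exact/subset_leq_card/regraft_lonely.
have [g g_star [cg no_lonely]] := IH _ lonely_le (regraft_star f_star s_lonely esw).
exists g => //; split=> //; apply: (leq_trans cg).
have s_center : s \in centers f by move: s_lonely; rewrite !inE => /andP [].
rewrite (leq_trans (subset_leq_card (regraft_centers f s w))) //.
by rewrite cardsU1 (cardsD1 s (centers f)) s_center; case: (_ \notin _).
Qed.

End DominoCoverings.

Theorem mainTheorem16 (T : finType) (e : rel T)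
  (e_sym : symmetric e) (e_irr : irreflexive e)
  (e_conn : forall x y : T, connect e x y)
  (two_vertices : 1 < #|T|) :
  (exists D : seq (T * T),
      [/\ domino_covering e D, saturated D & size D = #|T| - domination_number e]) /\
  (forall D : seq (T * T),
      domino_covering e D -> saturated D -> size D <= #|T| - domination_number e).
Proof.
have upper := saturated_size_le e_sym e_irr; split=> //.
have nbr := connected_has_neighbour e_conn two_vertices.
have [S domS cardS] := domination_number_attained e.
have [f f_star centers_f] := dominating_star_fun e_sym domS.
have [g g_star [centers_g no_lonely]] := remove_lonely e_sym e_irr nbr f_star.
have [D [covD satD sizeD]] := star_covering g_star no_lonely.
exists D; split=> //; apply/eqP; rewrite eqn_leq upper //= sizeD leq_sub2l //.
by rewrite -cardS (leq_trans centers_g) ?subset_leq_card.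
Qed.
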